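(* Let $n=4k$ with $k\ge2$, let $u_1,\ldots,u_k\in\mathbb{F}_{2^{2k}}^*$ satisfy $u_iu_j^{2^k}\in\mathbb{F}_{2^k}^*$ for all $1\le i<j\le k$, and let $\omega$ be a generator of the cyclic group $U=\{x\in\mathbb{F}_{2^{2k}}: x^{2^k+1}=1\}$. Let $t$ be a positive integer, $F_1,\ldots,F_t$ reduced polynomials in $\mathbb{F}_2[X_1,\ldots,X_k]$, and $f_i(x)=F_i(\mathrm{Tr}^n_1(u_1x),\ldots,\mathrm{Tr}^n_1(u_kx))$. Then $\widehat H(x)=(\mathrm{Tr}^n_k(\omega x^{2^k+1}),f_1(x),\ldots,f_t(x))$ is a vectorial plateaued $(n,k+t)$-function if and only if the $(n,t)$-function $(f_1,\ldots,f_t)$ is vectorial plateaued.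
   Context: $\mathrm{Tr}^m_1(x)=\sum_{i=0}^{m-1}x^{2^i}$, $\mathrm{Tr}^{4k}_k(x)=x+x^{2^k}+x^{2^{2k}}+x^{2^{3k}}$. $\widehat H:\mathbb{F}_{2^n}\to\mathbb{F}_{2^k}\times\mathbb{F}_2^t$ has components $\mathrm{Tr}^k_1(\lambda\,\mathrm{Tr}^n_k(\omega x^{2^k+1}))+\sum_iv_if_i(x)$, $(\lambda,v)\ne(0,0)$. A Boolean function $f$ is plateaued if $W_f(a)=\sum_x(-1)^{f(x)+\mathrm{Tr}^n_1(ax)}$ takes values in $\{0,\pm2^s\}$ for some $n/2\le s\le n$; a vectorial function is vectorial plateaued if all its components are plateaued. A reduced polynomial is a multilinear polynomial over $\mathbb{F}_2$. *)

From HB Require Import structures.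
From mathcomp Require Import all_boot all_order all_algebra all_field.
From mathcomp Require Import mpoly.
Set Implicit Arguments. Unset Strict Implicit. Unset Printing Implicit Defensive.
Import GRing.Theory.
Local Open Scope ring_scope.

Section Defs.
Variable L : finFieldType.

Definition tr1 (m : nat) (x : L) : L := \sum_(i < m) x ^+ (2 ^ i).

Definition trrel (m k : nat) (x : L) : L := \sum_(i < m %/ k) x ^+ (2 ^ (k * i)).

(* Walsh transform of a Boolean function f : F_{2^n} -> F_2 (n = degree of L) *)
Definition walsh (n : nat) (f : L -> bool) (a : L) : int :=
  \sum_(x : L) (-1) ^+ (f x (+) (tr1 n (a * x) != 0)).

Definition plateaued (n : nat) (f : L -> bool) : Prop :=
  exists s : nat, (n <= 2 * s)%N /\ (s <= n)%N /\
    forall a : L, walsh n f a = 0 \/ walsh n f a = (2 ^ s)%:Z \/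
                  walsh n f a = - (2 ^ s)%:Z.

Definition bcomb (t : nat) (v : 'I_t -> bool) (fs : 'I_t -> L -> bool) (x : L) : bool :=
  \big[addb/false]_(i < t) (v i && fs i x).

Definition vplateaued (n t : nat) (fs : 'I_t -> L -> bool) : Prop :=
  forall v : 'I_t -> bool, (exists i, v i) -> plateaued n (bcomb v fs).

(* the (n,k+t)-function Hhat(x) = (Tr^n_k(w x^(2^k+1)), f_1(x), ..., f_t(x)),
   with components Tr^k_1(lam Tr^n_k(w x^(2^k+1))) + sum_i v_i f_i(x),
   lam in F_{2^k}, v in F_2^t, (lam,v) <> (0,0) *)
Definition Hhat_component (n k t : nat) (w : L) (fs : 'I_t -> L -> bool)
    (lam : L) (v : 'I_t -> bool) (x : L) : bool :=
  (tr1 k (lam * trrel n k (w * x ^+ (2 ^ k + 1))) != 0) (+) bcomb v fs x.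

Definition Hhat_vplateaued (n k t : nat) (w : L) (fs : 'I_t -> L -> bool) : Prop :=
  forall (lam : L) (v : 'I_t -> bool),
    lam ^+ (2 ^ k) = lam -> (lam != 0 \/ exists i, v i) ->
    plateaued n (Hhat_component n k w fs lam v).

End Defs.

Definition reduced (k : nat) (P : {mpoly 'F_2[k]}) : Prop :=
  forall m, m \in msupp P -> forall i : 'I_k, (m i <= 1)%N.

(* f(x) = F(Tr^n_1(u_1 x), ..., Tr^n_1(u_k x)); Tr^n_1 values in F_2 = {0,1} *)
Definition fF (L : finFieldType) (n k : nat) (u : 'I_k -> L) (P : {mpoly 'F_2[k]})
    (x : L) : bool :=
  P.@[fun j : 'I_k => ((tr1 n (u j * x) != 0 : bool)%:R : 'F_2)] != 0.

From HB Require Import structures.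
From mathcomp Require Import all_boot all_order all_algebra all_field.
From mathcomp Require Import mpoly.
From mathcomp Require Import zify ring.
Set Implicit Arguments. Unset Strict Implicit. Unset Printing Implicit Defensive.
Import GRing.Theory Num.Theory.
Local Open Scope ring_scope.

(* Every component of H^ with lam != 0 is bent, so only the components with
   lam = 0, i.e. those of (f_1, ..., f_t), matter.  Put
   g(x) = Tr(lam w x^(2^k+1)); then g(x + z) = g(x) + g(z) + Tr(x L(z)) for an
   F_2-linear bijection L of F_(2^n).  Substituting x = y + z turns the Walsh
   transform of g + G(Tr(u_1 x), ..., Tr(u_k x)) at L(z) into +-1 times a sum
   over y of (-1)^g(y) H(Tr(u_1 y), ..., Tr(u_k y)).  The u_j lie in
   F_(2^(2k)), where g vanishes and which L maps onto itself, so W_g is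
   constant there, and Fourier inversion on F_2^k collapses the sum to
   W_g(0) H(0).  Hence every Walsh coefficient is +-W_g(0), and Parseval
   gives W_g(0)^2 = 2^n. *)

Lemma sum_eq0_sign_flip (T : finType) (F : T -> int) (s : T -> T) :
  injective s -> (forall x, F (s x) = - F x) -> \sum_x F x = 0.
Proof.
move=> s_inj Fs; set S := \sum_x F x.
have S_opp : S = - S.
  by rewrite {1}/S (reindex_inj s_inj) /= -sumrN; apply: eq_bigr => x _.
by apply/eqP; rewrite -[S == 0]orFb -(mulrn_eq0 S 2) mulr2n {1}S_opp addNr.
Qed.

Lemma eq_plateaued (L : finFieldType) n (f h : L -> bool) :
  f =1 h -> plateaued n f -> plateaued n h.
Proof.
move=> fh [s [s_lb [s_ub Wf]]]; exists s; split; [|split] => // a.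
have -> : walsh n h a = walsh n f a by apply: eq_bigr => x _; rewrite fh.
exact: Wf.
Qed.

Lemma eq_meval (R : comRingType) k (v1 v2 : 'I_k -> R) (p : {mpoly R[k]}) :
  v1 =1 v2 -> p.@[v1] = p.@[v2].
Proof.
by move=> v12; rewrite !mevalE; apply: eq_bigr => m _; under eq_bigr do rewrite v12.
Qed.

Lemma expr_pow2_fixM (R : pzSemiRingType) (x : R) j m :
  x ^+ (2 ^ j) = x -> x ^+ (2 ^ (j * m)) = x.
Proof.
by move=> xj; elim: m => [|m IHm]; rewrite ?muln0 ?expr1 // mulnS expnD exprM xj.
Qed.

Lemma dvdn_pred_pow4 a : (a + 1 %| (a ^ 4).-1)%N.
Proof.
case: a => // a; apply/dvdnP; exists (a * (a.+1 ^ 2 + 1))%N.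
by apply/eqP; rewrite -eqSS prednK ?expn_gt0 //; apply/eqP; ring.
Qed.

Lemma unit_circle_fixed (R : pzRingType) (x : R) a :
  (0 < a)%N -> x ^+ (a + 1) = 1 -> x ^+ (a ^ 2) = x.
Proof.
case: a => // a _ xa; have -> : (a.+1 ^ 2 = (a + 2) * a + 1)%N by ring.
by rewrite exprD exprM addn2 -addn1 xa expr1n mul1r.
Qed.

Lemma exists_root_of_unity_neq1 (F : finFieldType) d :
  (d %| #|F|.-1)%N -> (1 < d)%N -> exists2 x : F, x != 1 & x ^+ d = 1.
Proof.
move=> d_dvd d_gt1.
have F_gt1 : (1 < #|F|)%N by rewrite (cardD1 0) (cardD1 1) !inE oner_eq0.
have q_gt0 : (0 < #|F|.-1)%N by rewrite -ltnS prednK // ltnW.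
set m := (#|F|.-1 %/ d)%N.
have [y y_neq0 ym] : exists2 y : F, y != 0 & y ^+ m != 1.
  apply/exists_inP; apply: contraT; rewrite negb_exists_in => /forall_inP ym1.
  have m_gt0 : (0 < m)%N by rewrite divn_gt0 ?(ltnW d_gt1) // dvdn_leq.
  have := @max_unity_roots F m (enum (predC1 0)) m_gt0.
  rewrite enum_uniq -cardE cardC1 leqNgt ltn_Pdiv //; apply => //.
  by apply/allP => z; rewrite mem_enum unity_rootE => /ym1; rewrite negbK.
exists (y ^+ m) => //; rewrite -exprM divnK //.
by apply: (mulIf y_neq0); rewrite -exprSr prednK ?expf_card ?mul1r // ltnW.
Qed.

Lemma unit_circle_generator_neq1 (L : finFieldType) k (w : L) :
  #|L| = (2 ^ (4 * k))%N ->
  (forall x : L, x ^+ (2 ^ (2 * k)) = x -> x ^+ (2 ^ k + 1) = 1 ->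
     exists j : nat, x = w ^+ j) ->
  w != 1.
Proof.
move=> cardL w_gen.
have U_dvd : (2 ^ k + 1 %| #|L|.-1)%N by rewrite cardL mulnC expnM dvdn_pred_pow4.
have U_gt1 : (1 < 2 ^ k + 1)%N by rewrite addn1 ltnS expn_gt0.
have [x x_neq1 x_norm] := exists_root_of_unity_neq1 U_dvd U_gt1.
have x_2k : x ^+ (2 ^ (2 * k)) = x by rewrite mulnC expnM unit_circle_fixed ?expn_gt0.
have [j xE] := w_gen x x_2k x_norm.
by apply: contraNneq x_neq1 => w1; rewrite xE w1 expr1n.
Qed.

Section BooleanFourier.
Variable k : nat.
Local Notation bvec := {ffun 'I_k -> bool}.

Definition dotb (c d : bvec) : bool := \big[addb/false]_i (c i && d i).

Definition xorv (d e : bvec) : bvec := [ffun j => d j (+) e j].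

Lemma dotb0 c : dotb c [ffun => false] = false.
Proof. by rewrite /dotb big1 // => i _; rewrite ffunE andbF. Qed.

Lemma dotb_xorv c d e : dotb c (xorv d e) = dotb c d (+) dotb c e.
Proof.
by rewrite /dotb -big_split /=; apply: eq_bigr => j _; rewrite ffunE; case: (c j).
Qed.

Lemma xor0v d : xorv [ffun => false] d = d.
Proof. by apply/ffunP => j; rewrite !ffunE. Qed.

Lemma xorv_eq0 d e : (xorv d e == [ffun => false]) = (d == e).
Proof.
apply/eqP/eqP => [/ffunP de0|<-]; apply/ffunP => j; rewrite ?ffunE ?addbb //.
by move: (de0 j); rewrite !ffunE; case: (d j); case: (e j).
Qed.

Lemma sum_sign_dotb d :
  \sum_c (-1) ^+ dotb c d = if d == [ffun => false] then (2 ^ k)%:R else 0 :> int.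
Proof.
case: eqP => [->|/eqP d_neq0].
  under eq_bigr do rewrite dotb0.
  by rewrite sumr_const card_ffun card_bool card_ord.
have [i di] : exists i, d i.
  apply/existsP; apply: contraNT d_neq0; rewrite negb_exists => /forallP d0.
  by apply/eqP/ffunP => j; rewrite ffunE; apply/negbTE.
pose flip (c : bvec) : bvec := [ffun j => (j == i) (+) c j].
apply: (@sum_eq0_sign_flip _ _ flip).
  by apply: (can_inj (g := flip)) => c; apply/ffunP => j; rewrite !ffunE addbA addbb.
move=> c; rewrite -signrN; congr (_ ^+ _).
rewrite /dotb (bigD1 i) //= [in RHS](bigD1 i) //= ffunE eqxx di !andbT addNb.
by congr (~~ (_ (+) _)); apply: eq_bigr => j ji; rewrite ffunE (negbTE ji).
Qed.

Lemma fourier_inversion (H : bvec -> int) d :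
  \sum_c (\sum_e H e * (-1) ^+ dotb c e) * (-1) ^+ dotb c d = H d * (2 ^ k)%:R.
Proof.
have inner e : \sum_c H e * (-1) ^+ dotb c e * (-1) ^+ dotb c d =
    H e * (if e == d then (2 ^ k)%:R else 0).
  rewrite -xorv_eq0 -sum_sign_dotb mulr_sumr; apply: eq_bigr => c _.
  by rewrite dotb_xorv signr_addb mulrA.
under eq_bigr do rewrite mulr_suml.
rewrite exchange_big /=; under eq_bigr do rewrite inner.
by rewrite (bigD1 d) //= eqxx big1 ?addr0 // => e /negbTE ->; rewrite mulr0.
Qed.

End BooleanFourier.

Section BinaryField.
Variables (L : finFieldType) (n : nat).
Hypothesis cardL : #|L| = (2 ^ n)%N.

Lemma pchar2_card : 2 \in [pchar L].
Proof. exact: (@card_finPcharP L 2 n cardL). Qed.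

Lemma exprD_pow2 m (x y : L) : (x + y) ^+ (2 ^ m) = x ^+ (2 ^ m) + y ^+ (2 ^ m).
Proof. by apply: exprDn_pchar; rewrite pnatX pnatE // pchar2_card. Qed.

Lemma sumr_expr_pow2 m I (r : seq I) (P : pred I) (F : I -> L) :
  (\sum_(i <- r | P i) F i) ^+ (2 ^ m) = \sum_(i <- r | P i) F i ^+ (2 ^ m).
Proof.
apply: (big_morph (fun x => x ^+ (2 ^ m))); first exact: exprD_pow2.
by rewrite expr0n expn_eq0.
Qed.

Lemma expr_pow2_card (x : L) : x ^+ (2 ^ n) = x.
Proof. by rewrite -cardL expf_card. Qed.

Local Notation Tr := (@tr1 L n).

Lemma tr0 : Tr 0 = 0.
Proof. by rewrite /tr1 big1 // => i _; rewrite expr0n expn_eq0. Qed.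

Lemma trD x y : Tr (x + y) = Tr x + Tr y.
Proof. by rewrite /tr1 -big_split; apply: eq_bigr => i _; rewrite exprD_pow2. Qed.

Lemma tr_expr2 x : Tr (x ^+ 2) = Tr x.
Proof.
have := expr_pow2_card x; rewrite /tr1.
case: n cardL => [|m] _ xm; first by rewrite !big_ord0.
rewrite big_ord_recr big_ord_recl /= -exprM mulnC -expnSr xm expn0 addrC.
by congr (_ + _); apply: eq_bigr => i _; rewrite -exprM mulnC -expnSr.
Qed.

Lemma tr_expr_pow2 x j : Tr (x ^+ (2 ^ j)) = Tr x.
Proof. by elim: j => [|j IHj]; rewrite ?expr1 // expnSr exprM tr_expr2. Qed.

Lemma tr_sqr x : Tr x ^+ 2 = Tr x.
Proof.
rewrite -[RHS]tr_expr2 -(expn1 2) /tr1 sumr_expr_pow2.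
by apply: eq_bigr => i _; rewrite -!exprM mulnC.
Qed.

Lemma tr_subfield_half d (z : L) : n = (2 * d)%N -> z ^+ (2 ^ d) = z -> Tr z = 0.
Proof.
move=> n2d zd; rewrite /tr1 n2d -(big_mkord xpredT (fun m => z ^+ (2 ^ m))).
rewrite (@big_cat_nat _ _ _ d) ?leq_pmull //= -{2}[d]add0n big_addn.
rewrite (_ : 2 * d - d = d)%N; last by rewrite mul2n -addnn addnK.
rewrite [X in _ + X](eq_bigr (fun m => z ^+ (2 ^ m))) ?(addrr_pchar2 pchar2_card) //.
by move=> m _; rewrite expnD exprM exprAC zd.
Qed.

Lemma tr_blocks k x : (k %| n)%N ->
  Tr x = \sum_(i < n %/ k) \sum_(j < k) x ^+ (2 ^ (k * i + j)).
Proof.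
move=> kn; rewrite /tr1 -(big_mkord xpredT (fun m => x ^+ (2 ^ m))).
rewrite -{1}(divnK kn) big_nat_mul big_mkord; apply: eq_bigr => i _.
rewrite -{1}[(i * k)%N]add0n big_addn mulSn addnK big_mkord.
by apply: eq_bigr => j _; rewrite mulnC addnC.
Qed.

Lemma tr1_trrel k (lam y : L) : (k %| n)%N -> lam ^+ (2 ^ k) = lam ->
  tr1 k (lam * trrel n k y) = Tr (lam * y).
Proof.
move=> kn lamk; rewrite (tr_blocks _ kn) exchange_big /tr1 /trrel mulr_sumr.
apply: eq_bigr => j _; rewrite sumr_expr_pow2; apply: eq_bigr => i _.
by rewrite expnD exprM [in RHS]exprMn (expr_pow2_fixM _ lamk).
Qed.

Definition trb (x : L) : bool := Tr x != 0.

Lemma tr_boolE x : Tr x = (trb x)%:R.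
Proof.
rewrite /trb; have [->|nz] := eqVneq (Tr x) 0; first by [].
by apply: (mulfI nz); rewrite mulr1 -expr2 tr_sqr.
Qed.

Lemma trbD x y : trb (x + y) = trb x (+) trb y.
Proof.
have := trD x y; rewrite !tr_boolE; have two0 := addrr_pchar2 pchar2_card (1 : L).
by case: (trb x); case: (trb y); case: (trb (x + y));
  rewrite /= ?two0 ?addr0 ?add0r // => /eqP; rewrite ?oner_eq0 // eq_sym oner_eq0.
Qed.

Lemma trb0 : trb 0 = false.
Proof. by rewrite /trb tr0 eqxx. Qed.

Lemma trb_expr_pow2 x j : trb (x ^+ (2 ^ j)) = trb x.
Proof. by rewrite /trb tr_expr_pow2. Qed.

Lemma exists_trb : exists x, trb x.
Proof.
have n_gt0 : (0 < n)%N.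
  by rewrite -(@ltn_exp2l 2 0) // -cardL (cardD1 0) (cardD1 1) !inE oner_eq0.
apply/existsP; apply: contraT; rewrite negb_exists => /forallP tr_eq0.
pose p : {poly L} := \sum_(i < n.-1) 'X^(2 ^ i) + 'X^(2 ^ n.-1).
have p_size : size p = (2 ^ n.-1).+1.
  rewrite /p addrC size_addl size_polyXn // ltnS.
  apply: leq_trans (size_sum _ _ _) _; apply/bigmax_leqP => i _.
  by rewrite size_polyXn ltn_exp2l.
have p_tr x : p.[x] = Tr x.
  rewrite /tr1 -(prednK n_gt0) big_ord_recr hornerD horner_sum hornerXn /=.
  by congr (_ + _); apply: eq_bigr => i _; rewrite hornerXn.
have := @max_poly_roots _ p (enum L).
rewrite -size_poly_eq0 p_size enum_uniq -cardE cardL /=.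
have -> : all (root p) (enum L).
  by apply/allP => x _; rewrite /root p_tr; have := tr_eq0 x; rewrite negbK.
rewrite -(prednK n_gt0) expnS /= mul2n -addnn ltnS -{3}[(2 ^ n.-1)%N]add0n leq_add2r.
by move=> /(_ isT isT isT); rewrite leqn0 expn_eq0.
Qed.

Definition chi (x : L) : int := (-1) ^+ trb x.

Lemma chiD x y : chi (x + y) = chi x * chi y.
Proof. by rewrite /chi trbD signr_addb. Qed.

Lemma sum_chi b : \sum_x chi (b * x) = if b == 0 then (2 ^ n)%:R else 0.
Proof.
have [->|b_neq0] := eqVneq b 0.
  under eq_bigr do rewrite mul0r /chi trb0.
  by rewrite sumr_const cardL.
have [x0 tr_x0] := exists_trb.
apply: (@sum_eq0_sign_flip _ _ (+%R (x0 / b))); first exact: addrI.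
by move=> x; rewrite /= mulrDr mulrC divfK // chiD /chi tr_x0 mulN1r.
Qed.

Lemma walsh_sign (f : L -> bool) a :
  walsh n f a = \sum_x (-1) ^+ f x * chi (a * x).
Proof. by apply: eq_bigr => x _; rewrite signr_addb. Qed.

Lemma parseval (f : L -> bool) : \sum_a walsh n f a ^+ 2 = (2 ^ n * 2 ^ n)%:R.
Proof.
have sqrE a : walsh n f a ^+ 2 =
    \sum_x \sum_y (-1) ^+ f x * (-1) ^+ f y * chi ((x + y) * a).
  rewrite expr2 !walsh_sign mulr_suml; apply: eq_bigr => x _.
  rewrite mulr_sumr; apply: eq_bigr => y _.
  by rewrite mulrDl chiD mulrACA ![_ * a]mulrC.
under eq_bigr do rewrite sqrE.
rewrite exchange_big /= (eq_bigr (fun _ => (2 ^ n)%:R)) => [|x _].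
  by rewrite sumr_const cardL natrM mulr_natr.
rewrite exchange_big /= (bigD1 x) //= [X in _ + X]big1 ?addr0 => [|y yx].
  by rewrite -mulr_sumr sum_chi (addrr_pchar2 pchar2_card) eqxx -expr2 sqrr_sign mul1r.
by rewrite -mulr_sumr sum_chi addr_eq0 (oppr_pchar2 pchar2_card) eq_sym (negbTE yx) mulr0.
Qed.

Section TraceCoordinates.
Variables (m : nat) (u : 'I_m -> L).
Local Notation bvec := {ffun 'I_m -> bool}.

Definition trvec (y : L) : bvec := [ffun j => trb (u j * y)].

Definition span_elt (c : bvec) : L := \sum_(i | c i) u i.

Lemma trvecD y z : trvec (y + z) = xorv (trvec y) (trvec z).
Proof. by apply/ffunP => j; rewrite !ffunE mulrDr trbD. Qed.

Lemma dotb_trvec c y : dotb c (trvec y) = trb (span_elt c * y).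
Proof.
rewrite /span_elt mulr_suml (big_morph trb trbD trb0) /dotb [RHS]big_mkcond /=.
by apply: eq_bigr => i _; rewrite ffunE; case: (c i).
Qed.

Lemma sum_trvec (s : L -> int) (W0 : int) (H : bvec -> int) :
  (forall c, \sum_y s y * chi (span_elt c * y) = W0) ->
  \sum_y s y * H (trvec y) = W0 * H [ffun => false].
Proof.
move=> sW0; have two_m_neq0 : (2 ^ m)%:R != 0 :> int by rewrite pnatr_eq0 expn_eq0.
apply: (mulIf two_m_neq0); rewrite -mulrA -fourier_inversion mulr_sumr mulr_suml.
under eq_bigr do rewrite -mulrA -fourier_inversion mulr_sumr.
rewrite exchange_big /=; apply: eq_bigr => c _.
rewrite dotb0 mulr1 -(sW0 c) mulr_suml; apply: eq_bigr => y _.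
by rewrite dotb_trvec mulrA mulrAC.
Qed.

End TraceCoordinates.

Section QuadraticForm.
Variables (k : nat) (w lam : L).
Hypotheses (n4k : n = (4 * k)%N) (w_neq1 : w != 1).
Hypotheses (w_2k : w ^+ (2 ^ (2 * k)) = w) (w_norm : w ^+ (2 ^ k + 1) = 1).
Hypotheses (lam_k : lam ^+ (2 ^ k) = lam) (lam_neq0 : lam != 0).

Definition qf (x : L) : bool := trb (lam * (w * x ^+ (2 ^ k + 1))).

Definition polar (z : L) : L :=
  lam * (w * z ^+ (2 ^ k) + w^-1 * z ^+ (2 ^ (3 * k))).

Lemma expr_pow2_4k (x : L) : x ^+ (2 ^ (4 * k)) = x.
Proof. by rewrite -n4k expr_pow2_card. Qed.

Lemma lam_fix j : lam ^+ (2 ^ (j * k)) = lam.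
Proof. by rewrite mulnC (expr_pow2_fixM _ lam_k). Qed.

Lemma w_neq0 : w != 0.
Proof. by apply: contra_eq_neq w_norm => ->; rewrite expr0n addn1 eq_sym oner_eq0. Qed.

Lemma w_conj : w ^+ (2 ^ k) = w^-1.
Proof. by apply: (mulfI w_neq0); rewrite -exprS -addn1 w_norm divff ?w_neq0. Qed.

Lemma w_conj3 : w ^+ (2 ^ (3 * k)) = w^-1.
Proof. by rewrite mulSn expnD mulnC exprM w_2k w_conj. Qed.

Lemma w_add_inv_neq0 : w + w^-1 != 0.
Proof.
have sqrE : (w + 1) ^+ 2 = w * (w + w^-1).
  rewrite sqrrD mulr2n mulr1 (addrr_pchar2 pchar2_card) addr0 expr1n.
  by rewrite mulrDr divff ?w_neq0 // expr2.
apply: contraNneq w_neq1 => w_inv; move: sqrE; rewrite w_inv mulr0 => /eqP.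
by rewrite expf_eq0 /= addr_eq0 (oppr_pchar2 pchar2_card).
Qed.

Lemma qf_add x z : qf (x + z) = qf x (+) qf z (+) trb (x * polar z).
Proof.
have cross : trb (lam * (w * (z * x ^+ (2 ^ k)))) =
    trb (x * (lam * (w^-1 * z ^+ (2 ^ (3 * k))))).
  rewrite -(trb_expr_pow2 _ (3 * k)) !exprMn lam_fix w_conj3.
  rewrite -exprM -expnD (_ : k + 3 * k = 4 * k)%N ?expr_pow2_4k; last by rewrite mulSn.
  by rewrite [in RHS]mulrC -!mulrA.
have expand : lam * (w * (x + z) ^+ (2 ^ k + 1)) =
    lam * (w * x ^+ (2 ^ k + 1)) + lam * (w * z ^+ (2 ^ k + 1)) +
    x * (lam * (w * z ^+ (2 ^ k))) + lam * (w * (z * x ^+ (2 ^ k))).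
  by rewrite !addn1 !exprS exprD_pow2; move: (x ^+ _) (z ^+ _) => X Z; ring.
by rewrite /qf expand !trbD cross /polar !mulrDr trbD !addbA.
Qed.

Lemma polarD y z : polar (y + z) = polar y + polar z.
Proof. by rewrite /polar !exprD_pow2; ring. Qed.

Lemma polar_eq0 z : polar z = 0 -> z = 0.
Proof.
set y := z ^+ (2 ^ k); set y' := z ^+ (2 ^ (3 * k)).
have y'_2k : y' ^+ (2 ^ (2 * k)) = y.
  rewrite -exprM -expnD (_ : (3 * k + 2 * k = 4 * k + k)%N); last by lia.
  by rewrite expnD exprM expr_pow2_4k.
have y_2k : y ^+ (2 ^ (2 * k)) = y'.
  by rewrite -exprM -expnD (_ : (k + 2 * k = 3 * k)%N) //; lia.
move/eqP; rewrite /polar mulf_eq0 (negbTE lam_neq0) /= -/y -/y' => /eqP eq1.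
have eq2 : w * y' + w^-1 * y = 0.
  move: (congr1 (fun a => a ^+ (2 ^ (2 * k))) eq1).
  by rewrite /= exprD_pow2 !exprMn exprVn w_2k y_2k y'_2k expr0n expn_eq0.
have : (w + w^-1) * (y + y') = (w * y + w^-1 * y') + (w * y' + w^-1 * y) by ring.
rewrite eq1 eq2 addr0 => /eqP.
rewrite mulf_eq0 (negbTE w_add_inv_neq0) addr_eq0 (oppr_pchar2 pchar2_card) /=.
move=> /eqP y'E; move/eqP: eq1; rewrite -y'E -mulrDl mulf_eq0.
by rewrite (negbTE w_add_inv_neq0) expf_eq0 => /andP[_ /eqP].
Qed.

Lemma polar_inj : injective polar.
Proof.
move=> y z yz; apply/eqP; rewrite -subr_eq0; apply/eqP/polar_eq0.
by rewrite (oppr_pchar2 pchar2_card) polarD yz (addrr_pchar2 pchar2_card).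
Qed.

Lemma polar_onto_subfield s : s ^+ (2 ^ (2 * k)) = s ->
  exists2 z, z ^+ (2 ^ (2 * k)) = z & polar z = s.
Proof.
move=> s_2k; pose mu := (lam * (w + w^-1))^-1.
have mu_k : mu ^+ (2 ^ k) = mu.
  by rewrite /mu exprVn exprMn lam_k exprD_pow2 w_conj exprVn w_conj invrK addrC.
have mu_fix j : mu ^+ (2 ^ (j * k)) = mu by rewrite mulnC (expr_pow2_fixM _ mu_k).
have z_k : (mu * s ^+ (2 ^ k)) ^+ (2 ^ k) = mu * s.
  by rewrite exprMn mu_k -exprM -expnD addnn -mul2n s_2k.
exists (mu * s ^+ (2 ^ k)); first by rewrite exprMn mu_fix exprAC s_2k.
have z_3k : (mu * s ^+ (2 ^ k)) ^+ (2 ^ (3 * k)) = mu * s.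
  by rewrite mulSn expnD exprM z_k exprMn mu_fix s_2k.
rewrite /polar z_k z_3k -mulrDl !mulrA /mu divff ?mul1r //.
by rewrite mulf_neq0 ?w_add_inv_neq0.
Qed.

Lemma qf_subfield z : z ^+ (2 ^ (2 * k)) = z -> qf z = false.
Proof.
move=> z_2k; rewrite /qf /trb (@tr_subfield_half (2 * k)) ?eqxx //.
  by rewrite n4k; lia.
by rewrite !exprMn lam_fix w_2k exprAC z_2k.
Qed.

Definition Wq0 : int := \sum_x (-1) ^+ qf x.

Lemma walsh_qf_shift (f : L -> bool) z :
  walsh n (fun x => qf x (+) f x) (polar z) =
  (-1) ^+ qf z * \sum_y (-1) ^+ qf y * (-1) ^+ f (y + z).
Proof.
rewrite walsh_sign mulr_sumr (reindex_inj (addIr z)) /=; apply: eq_bigr => y _.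
have := qf_add (y + z) z; rewrite -addrA (addrr_pchar2 pchar2_card) addr0 => ->.
rewrite /chi [polar z * _]mulrC mulrC -!signr_addb; congr (_ ^+ _).
move: (qf (y + z)) (qf z) (f (y + z)) (trb _) => a b c d.
by case: a; case: b; case: c; case: d.
Qed.

Lemma walsh_qf_polar z : walsh n qf (polar z) = (-1) ^+ qf z * Wq0.
Proof.
transitivity (walsh n (fun x => qf x (+) false) (polar z)).
  by apply: eq_bigr => x _; rewrite addbF.
by rewrite walsh_qf_shift /=; under eq_bigr do rewrite expr0 mulr1.
Qed.

Lemma walsh_qf_subfield s : s ^+ (2 ^ (2 * k)) = s ->
  \sum_x (-1) ^+ qf x * chi (s * x) = Wq0.
Proof.
move=> /polar_onto_subfield [z z_2k <-].
by rewrite -walsh_sign walsh_qf_polar qf_subfield // expr0 mul1r.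
Qed.

Lemma Wq0_sqr : Wq0 ^+ 2 = (2 ^ n)%:R.
Proof.
have := parseval qf; rewrite (reindex_inj polar_inj) /=.
under eq_bigr do rewrite walsh_qf_polar exprMn sqrr_sign mul1r.
rewrite sumr_const cardL natrM mulr_natl => /eqP.
by rewrite eqrMn2r expn_eq0 => /eqP.
Qed.

Lemma Wq0E : Wq0 = (2 ^ (2 * k))%:Z \/ Wq0 = - (2 ^ (2 * k))%:Z.
Proof.
have : (Wq0 == (2 ^ (2 * k))%:Z) || (Wq0 == - (2 ^ (2 * k))%:Z).
  rewrite -eqf_sqr Wq0_sqr -natz -natrX -expnM n4k.
  by rewrite (_ : (2 * k * 2 = 4 * k)%N) //; lia.
by case/orP => /eqP; [left | right].
Qed.

Section Coordinates.
Variables (m : nat) (u : 'I_m -> L).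
Hypothesis u_2k : forall i, u i ^+ (2 ^ (2 * k)) = u i.

Lemma walsh_qf_trvec (G : {ffun 'I_m -> bool} -> bool) z :
  walsh n (fun x => qf x (+) G (trvec u x)) (polar z) =
  (-1) ^+ qf z * Wq0 * (-1) ^+ G (trvec u z).
Proof.
rewrite walsh_qf_shift -mulrA; under eq_bigr do rewrite trvecD.
rewrite (sum_trvec (W0 := Wq0) (fun d => (-1) ^+ G (xorv d (trvec u z)))) ?xor0v //.
move=> c; apply: walsh_qf_subfield; rewrite /span_elt sumr_expr_pow2.
by apply: eq_bigr => i _; exact: u_2k.
Qed.

Lemma plateaued_qf_trvec (G : {ffun 'I_m -> bool} -> bool) :
  plateaued n (fun x => qf x (+) G (trvec u x)).
Proof.
exists (2 * k)%N; split; [|split]; [by rewrite n4k; lia | by rewrite n4k; lia | move=> a].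
have /codomP [z ->] := injF_onto polar_inj a.
rewrite walsh_qf_trvec; right.
by case: Wq0E => ->; case: (qf z); case: (G _);
  rewrite ?expr0 ?expr1 ?mul1r ?mulr1 ?mulN1r ?mulrN1 ?opprK; tauto.
Qed.

End Coordinates.

End QuadraticForm.

End BinaryField.

Theorem corollary8 (L : finFieldType) (k t : nat)
  (hk : (2 <= k)%N) (ht : (0 < t)%N)
  (hL : #|L| = (2 ^ (4 * k))%N)
  (u : 'I_k -> L)
  (hu : forall i, u i != 0 /\ u i ^+ (2 ^ (2 * k)) = u i)
  (huij : forall i j : 'I_k, (i < j)%N ->
     u i * u j ^+ (2 ^ k) != 0 /\
     (u i * u j ^+ (2 ^ k)) ^+ (2 ^ k) = u i * u j ^+ (2 ^ k))
  (w : L)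
  (hw : w ^+ (2 ^ (2 * k)) = w /\ w ^+ (2 ^ k + 1) = 1 /\
        forall x : L, x ^+ (2 ^ (2 * k)) = x -> x ^+ (2 ^ k + 1) = 1 ->
          exists j : nat, x = w ^+ j)
  (F : 'I_t -> {mpoly 'F_2[k]}) (hF : forall i, reduced (F i)) :
  Hhat_vplateaued (4 * k) k w (fun i => fF (4 * k) u (F i)) <->
  vplateaued (4 * k) (fun i => fF (4 * k) u (F i)).
Proof.
(* Only hL, hw and [u i \in F_(2^(2k))] are used: the components with
   lam != 0 are bent whatever the f_i are. *)
case: hw => w_2k [w_norm w_gen].
have w_neq1 := unit_circle_generator_neq1 hL w_gen.
have u_2k i : u i ^+ (2 ^ (2 * k)) = u i by case: (hu i).
pose G (v : 'I_t -> bool) (d : {ffun 'I_k -> bool}) :=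
  \big[addb/false]_(i < t) (v i && ((F i).@[fun j => (d j)%:R] != 0)).
have bcombE v x : bcomb v (fun i => fF (4 * k) u (F i)) x = G v (trvec (4 * k) u x).
  apply: eq_bigr => i _; congr (_ && (_ != 0)).
  by apply: eq_meval => j; rewrite ffunE.
have Hhat0 v x : Hhat_component (4 * k) k w (fun i => fF (4 * k) u (F i)) 0 v x =
    bcomb v (fun i => fF (4 * k) u (F i)) x.
  by rewrite /Hhat_component mul0r tr0 eqxx.
split => [Hpl v v_neq0 | fs_pl lam v lam_k lam_v].
  apply: eq_plateaued (Hpl 0 v _ _) => [x||]; first exact: Hhat0; last by right.
  by rewrite expr0n expn_eq0.
have [lam0 | lam_neq0] := eqVneq lam 0.
  rewrite lam0 in lam_v *.
  apply: eq_plateaued (fs_pl v _) => [x|]; first by rewrite Hhat0.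
  by case: lam_v; rewrite ?eqxx.
apply: eq_plateaued (plateaued_qf_trvec hL erefl w_neq1 w_2k w_norm lam_k lam_neq0 u_2k (G v)).
by move=> x; rewrite /Hhat_component (tr1_trrel hL) ?dvdn_mull // bcombE.
Qed.
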